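(* Let $(A,p)$ be a financial market with a riskless asset with $p_1=1$, and let $(\Theta,D)$ be the corresponding matrix scheme. Then $(A,p)$ contains no arbitrage portfolio if and only if for every subset $D'\subseteq D$ with $|D'|\ge 2$ the matrix scheme $(\Theta,D')$ contains uncertainty.
   Context: Vector order: for $x,y\in\mathbb{R}^k$, $x\le y$ means $x_i\le y_i$ for all $i$, and $x<y$ means $x\le y$ and $x\neq y$. A financial market with a riskless asset is a pair $(A,p)$ with $A\in\mathbb{R}^{n\times m}$, $p\in\mathbb{R}^n$, such that $A_{1j}=1$ for all $j\in\{1,\dots,m\}$ (here we additionally assume $p_1=1$). A portfolio $x\in\mathbb{R}^n$ is an arbitrage portfolio on $(A,p)$ if either ($p^Tx\le 0$ and $A^Tx>0$) or ($p^Tx<0$ and $A^Tx\ge 0$). The corresponding matrix scheme is $(\Theta,D)$ with $\Theta=\{1,\dots,m\}$, $B=A-[p\ p\ \cdots\ p]$ (i.e. $B_{i\theta}=A_{i\theta}-p_i$), and $D=\{B^Tx: x\in\mathbb{R}^n\}\subseteq\mathbb{R}^m$, each vector viewed as a real function on $\Theta$. A matrix scheme is a pair $(\Theta,D')$ with $D'$ a set of real functions on $\Theta$. A preference relation on a set $X$ is an asymmetric ($x\prec y\Rightarrow$ not $y\prec x$) and negatively transitive (not $x\prec y$ and not $y\prec z\Rightarrow$ not $x\prec z$) binary relation. Domination on $D'$: $d_1\prec d_2$ iff $d_1(\theta)\le d_2(\theta)$ for all $\theta$ and $d_1(\theta^* )<d_2(\theta^* )$ for some $\theta^*$. A projection of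 preference of consequences in $(\Theta,D')$ is a preference relation $\prec^P$ on $D'$ with $d_1\prec d_2\Rightarrow d_1\prec^P d_2$ for all $d_1,d_2\in D'$. The scheme $(\Theta,D')$ contains uncertainty if this projection is not unique. *)

(* the statement is purely algebraic/order-theoretic, so it is
   stated over an arbitrary real field R (R = the reals is a special case). *)
From HB Require Import structures.
From mathcomp Require Import all_boot all_order all_algebra.
Set Implicit Arguments. Unset Strict Implicit. Unset Printing Implicit Defensive.
Import Order.TTheory GRing.Theory Num.Theory.
Local Open Scope ring_scope.

Definition vle (R : realFieldType) (k l : nat) (x y : 'M[R]_(k, l)) : Prop :=
  forall i j, x i j <= y i j.
Definition vlt (R : realFieldType) (k l : nat) (x y : 'M[R]_(k, l)) : Prop :=
  vle x y /\ x <> y.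

(* Financial market with a riskless asset: row 1 (index ord0) of A is all ones,
   and p_1 = 1.  Assets are indexed by 'I_n.+1, states by 'I_m.+1. *)
Definition riskless_market (R : realFieldType) (n m : nat)
    (A : 'M[R]_(n.+1, m.+1)) (p : 'cV[R]_n.+1) : Prop :=
  (forall j, A ord0 j = 1) /\ p ord0 ord0 = 1.

Definition arbitrage_portfolio (R : realFieldType) (n m : nat)
    (A : 'M[R]_(n.+1, m.+1)) (p : 'cV[R]_n.+1) (x : 'cV[R]_n.+1) : Prop :=
  ((p^T *m x) ord0 ord0 <= 0 /\ vlt 0 (A^T *m x))
  \/ ((p^T *m x) ord0 ord0 < 0 /\ vle 0 (A^T *m x)).

Definition schemeB (R : realFieldType) (n m : nat)
    (A : 'M[R]_(n.+1, m.+1)) (p : 'cV[R]_n.+1) : 'M[R]_(n.+1, m.+1) :=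
  \matrix_(i, j) (A i j - p i ord0).

(* The set D = { B^T x : x in R^n } of the corresponding matrix scheme;
   elements are column vectors indexed by Theta = 'I_m.+1. *)
Definition schemeD (R : realFieldType) (n m : nat)
    (A : 'M[R]_(n.+1, m.+1)) (p : 'cV[R]_n.+1) (d : 'cV[R]_m.+1) : Prop :=
  exists x : 'cV[R]_n.+1, d = (schemeB A p)^T *m x.

Definition dominates (R : realFieldType) (m : nat) (d1 d2 : 'cV[R]_m) : Prop :=
  (forall t, d1 t ord0 <= d2 t ord0) /\ (exists t, d1 t ord0 < d2 t ord0).

Definition preference_on (T : Type) (S : T -> Prop) (r : T -> T -> Prop) : Prop :=
  (forall x y, S x -> S y -> r x y -> ~ r y x) /\
  (forall x y z, S x -> S y -> S z -> ~ r x y -> ~ r y z -> ~ r x z).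

Definition projection_of_preference (R : realFieldType) (m : nat)
    (S : 'cV[R]_m -> Prop) (r : 'cV[R]_m -> 'cV[R]_m -> Prop) : Prop :=
  preference_on S r /\
  (forall d1 d2, S d1 -> S d2 -> dominates d1 d2 -> r d1 d2).

Definition contains_uncertainty (R : realFieldType) (m : nat)
    (S : 'cV[R]_m -> Prop) : Prop :=
  exists r1 r2, projection_of_preference S r1 /\ projection_of_preference S r2 /\
    exists d1 d2, S d1 /\ S d2 /\ ~ (r1 d1 d2 <-> r2 d1 d2).

From HB Require Import structures.
From mathcomp Require Import all_boot all_order all_algebra.
Set Implicit Arguments. Unset Strict Implicit. Unset Printing Implicit Defensive.
Import Order.TTheory GRing.Theory Num.Theory.
Local Open Scope ring_scope.

(* Write B = A - [p ... p], so that (B^T x)_j = (A^T x)_j - p^T x.  Using the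
   riskless asset (first row of A and first price equal to 1), a portfolio can
   be shifted by a multiple of the riskless asset to make its price zero, and
   this shows:  (A, p) has an arbitrage portfolio  iff  some d in D dominates 0.
   Since D is a linear subspace, d1 < d2 in D iff 0 < d2 - d1 in D, so absence of
   arbitrage means that no two elements of D are related by domination.
   On the side of abstract schemes we prove two facts:
   - if no element of S dominates another and S has two distinct elements
     d1 <> d2, then the empty relation and "d1 is strictly preferred to
     everything else" are two different projections, so S contains uncertainty;
   - if a dominates b, the only projection on {a, b} is "a before b", so the
     scheme {a, b} contains no uncertainty.
   The theorem follows: without arbitrage every D' is an antichain, and an
   arbitrage gives a dominating pair {0, d} in D without uncertainty. *)

Section Preferences.
Variables (T : eqType) (S : T -> Prop).

Lemma preference_irrefl (r : T -> T -> Prop) x :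
  preference_on S r -> S x -> ~ r x x.
Proof. by move=> [asym _] Sx rxx; exact: (asym x x Sx Sx rxx rxx). Qed.

Lemma empty_preference : preference_on S (fun _ _ => False).
Proof. by split=> [x y _ _ []|x y z _ _ _ _ _ []]. Qed.

Lemma top_preference (a : T) :
  preference_on S (fun x y => x = a /\ y <> a).
Proof.
split=> [x y _ _ [-> _] [] //|x y z _ _ _ nxy nyz [xa za]].
have [ya|ya] := eqVneq y a; first by apply: nyz; rewrite ya.
by apply: nxy; split=> //; apply/eqP.
Qed.

End Preferences.

Section Domination.
Variables (R : realFieldType) (m : nat).
Implicit Types (a b : 'cV[R]_m) (S : 'cV[R]_m -> Prop).

Lemma dominates_neq a b : dominates a b -> a <> b.
Proof. by move=> [_ [t abt]] ab; move: abt; rewrite ab ltxx. Qed.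

Lemma dominates_subr a b : dominates a b -> dominates 0 (b - a).
Proof.
move=> [ab [t abt]]; split=> [s|]; first by rewrite !mxE subr_ge0.
by exists t; rewrite !mxE subr_gt0.
Qed.

Lemma antichain_uncertainty S d1 d2 :
  (forall a b, S a -> S b -> ~ dominates a b) ->
  S d1 -> S d2 -> d1 <> d2 -> contains_uncertainty S.
Proof.
move=> antichain S1 S2 d12.
exists (fun _ _ => False), (fun x y => x = d1 /\ y <> d1).
have projection r : preference_on S r -> projection_of_preference S r.
  by move=> pref; split=> // a b Sa Sb /(antichain a b Sa Sb).
split; first exact/projection/empty_preference.
split; first exact/projection/top_preference.
by exists d1, d2; do 2!split=> //; case=> _ []; split=> // /esym.
Qed.

Lemma pair_projection a b (r : 'cV[R]_m -> 'cV[R]_m -> Prop) x y :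
  dominates a b -> projection_of_preference (fun z => z = a \/ z = b) r ->
  x = a \/ x = b -> y = a \/ y = b -> (r x y <-> x = a /\ y = b).
Proof.
move=> ab [pref proj] Sx Sy.
have Sa : a = a \/ a = b by left.
have Sb : b = a \/ b = b by right.
have rab := proj a b Sa Sb ab.
split; last by case=> -> ->.
case: Sx => ->; case: Sy => -> rxy //.
- by case: (preference_irrefl pref Sa rxy).
- by case: pref => asym _; case: (asym a b Sa Sb rab rxy).
- by case: (preference_irrefl pref Sb rxy).
Qed.

Lemma pair_certainty a b :
  dominates a b -> ~ contains_uncertainty (fun z => z = a \/ z = b).
Proof.
move=> ab [r1 [r2 [P1 [P2 [x [y [Sx [Sy]]]]]]]]; apply.
have E1 := pair_projection ab P1 Sx Sy; have E2 := pair_projection ab P2 Sx Sy.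
by split=> rxy; [apply/E2; apply/E1 | apply/E1; apply/E2].
Qed.

End Domination.

Lemma vlt0_pos (R : realFieldType) (k : nat) (v : 'cV[R]_k) :
  vlt 0 v -> exists t, 0 < v t ord0.
Proof.
move=> [v_ge0 v_ne0].
have [/existsP [t v_gt0]|/existsPn v_le0] := boolP [exists t, 0 < v t ord0].
  by exists t.
case: v_ne0; apply/matrixP => i j; rewrite (ord1 j) mxE; apply/eqP.
rewrite eq_le andbC leNgt v_le0 /=.
by move: (v_ge0 i ord0); rewrite mxE.
Qed.

Section Market.
Variables (R : realFieldType) (n m : nat).
Variables (A : 'M[R]_(n.+1, m.+1)) (p : 'cV[R]_n.+1).

Lemma schemeB_mulmx (x : 'cV[R]_n.+1) j :
  ((schemeB A p)^T *m x) j ord0 = (A^T *m x) j ord0 - (p^T *m x) ord0 ord0.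
Proof. by rewrite !mxE -sumrB; apply: eq_bigr => i _; rewrite !mxE mulrBl. Qed.

Lemma schemeD_subr d1 d2 :
  schemeD A p d1 -> schemeD A p d2 -> schemeD A p (d2 - d1).
Proof. by move=> [x1 ->] [x2 ->]; exists (x2 - x1); rewrite mulmxBr. Qed.

(* The consequence of an arbitrage portfolio dominates the zero consequence:
   its price is nonpositive and its payoff nonnegative, and one of the two
   comparisons is strict somewhere. *)
Lemma arbitrage_dominates x :
  arbitrage_portfolio A p x -> dominates 0 ((schemeB A p)^T *m x).
Proof.
move=> arb; set price := (p^T *m x) ord0 ord0.
have price_le0 : price <= 0 by case: arb => [[]|[/ltW]].
have pay_ge0 t : 0 <= (A^T *m x) t ord0.
  by case: arb => [[_ [pay_ge0 _]]|[_ pay_ge0]]; move: (pay_ge0 t ord0); rewrite mxE.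
split=> [t|]; first by rewrite mxE schemeB_mulmx subr_ge0 (le_trans price_le0).
have [t price_lt] : exists t, price < (A^T *m x) t ord0.
  case: arb => [[_ /vlt0_pos [t pay_gt0]]|[price_lt0 _]].
    by exists t; rewrite (le_lt_trans price_le0).
  by exists ord0; rewrite (lt_le_trans price_lt0).
by exists t; rewrite mxE schemeB_mulmx subr_gt0.
Qed.

(* Conversely, in a market with a riskless asset a consequence dominating 0
   yields an arbitrage: finance x by short-selling p^T x units of the riskless
   asset, which keeps the consequences and makes the price zero. *)
Lemma dominates_arbitrage y :
  riskless_market A p -> dominates 0 ((schemeB A p)^T *m y) ->
  exists x, arbitrage_portfolio A p x.
Proof.
move=> [riskless p1] [dom_le [t dom_lt]].
set c := (p^T *m y) ord0 ord0.
set x := y - c *: delta_mx ord0 ord0.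
have payoff j : (A^T *m x) j ord0 = ((schemeB A p)^T *m y) j ord0.
  by rewrite schemeB_mulmx /x mulmxBr -scalemxAr -colE !mxE riskless mulr1 /c !mxE.
have price : (p^T *m x) ord0 ord0 = 0.
  by rewrite /x mulmxBr -scalemxAr -colE !mxE p1 mulr1 /c mxE subrr.
exists x; left; split; first by rewrite price.
split=> [i j|pay0]; first by rewrite (ord1 j) mxE payoff; move: (dom_le i); rewrite mxE.
by move: dom_lt; rewrite -payoff -pay0 !mxE ltxx.
Qed.

End Market.

Theorem theorem2 (R : realFieldType) (n m : nat)
    (A : 'M[R]_(n.+1, m.+1)) (p : 'cV[R]_n.+1) :
  riskless_market A p ->
  ((~ exists x : 'cV[R]_n.+1, arbitrage_portfolio A p x) <->
   (forall D' : 'cV[R]_m.+1 -> Prop,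
      (forall d, D' d -> schemeD A p d) ->
      (exists d1 d2, D' d1 /\ D' d2 /\ d1 <> d2) ->
      contains_uncertainty D')).
Proof.
move=> riskless; split.
- move=> no_arb D' sub [d1 [d2 [D1 [D2 d12]]]].
  apply: (antichain_uncertainty _ D1 D2 d12) => a b Da Db /dominates_subr.
  have [x ->] := schemeD_subr (sub a Da) (sub b Db).
  by move=> dom; apply: no_arb; exact: dominates_arbitrage riskless dom.
- move=> uncertain [x /arbitrage_dominates dom].
  apply: (pair_certainty dom); apply: uncertain.
    by move=> d [->|->]; [exists 0; rewrite mulmx0 | exists x].
  by exists 0, ((schemeB A p)^T *m x); split; [left | split; [right | exact: dominates_neq]].
Qed.
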